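(* Let $P$, $P'$ and $Q$ be transition matrices on the finite set $S$, all reversible with respect to $\pi$, with $P$ and $P'$ irreducible, and let $0<a<1$. Then $P'$ efficiency-dominates $P$ if and only if $aP'+(1-a)Q$ efficiency-dominates $aP+(1-a)Q$.
   Context: $S$ is a finite set, and $\pi$ is a probability distribution on $S$ with $\pi(x)>0$ for all $x$. A transition matrix $P$ is reversible with respect to $\pi$ if $\pi(x)P(x,y)=\pi(y)P(y,x)$ for all $x,y$; irreducible if every state can be reached from every other with positive probability in some number of steps. For a Markov chain $X_1,X_2,\dots$ with transition matrix $P$ and $X_1\sim\pi$, $v(f,P)=\lim_{N\to\infty}\frac1N\mathrm{Var}\big(\sum_{i=1}^N f(X_i)\big)$. $P$ efficiency-dominates $Q$ if $v(f,P)\le v(f,Q)$ for all $f:S\to\mathbb R$. *)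

From HB Require Import structures.
From mathcomp Require Import all_boot all_order all_algebra.
From mathcomp Require Import all_classical all_reals all_analysis.
Set Implicit Arguments. Unset Strict Implicit. Unset Printing Implicit Defensive.
Import Order.TTheory GRing.Theory Num.Theory.
Import numFieldNormedType.Exports.
Local Open Scope ring_scope.

Section MarkovDefs.
Variables (R : realType) (S : finType).

Definition is_distribution (pi : S -> R) : Prop :=
  (forall x, 0 < pi x) /\ \sum_(x : S) pi x = 1.

Definition is_transition (P : S -> S -> R) : Prop :=
  (forall x y, 0 <= P x y) /\ (forall x, \sum_(y : S) P x y = 1).

Definition reversible (pi : S -> R) (P : S -> S -> R) : Prop :=
  forall x y, pi x * P x y = pi y * P y x.

Fixpoint mpow (P : S -> S -> R) (n : nat) : S -> S -> R :=
  match n with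
  | 0 => fun x y => if x == y then 1 else 0
  | n'.+1 => fun x y => \sum_(z : S) mpow P n' x z * P z y
  end.

Definition irreducible (P : S -> S -> R) : Prop :=
  forall x y, exists n, 0 < mpow P n x y.

(* probability of the trajectory (X_1,...,X_N) = (w 0, ..., w (N-1))
   for the chain with transition matrix P started from X_1 ~ pi *)
Definition path_prob (pi : S -> R) (P : S -> S -> R) (N : nat)
  (w : {ffun 'I_N -> S}) : R :=
  \prod_(i < N) (match val i with
                 | 0 => pi (w i)
                 | k.+1 => oapp (fun j : 'I_N => P (w j) (w i)) 0 (insub k)
                 end).

Definition pathE (pi : S -> R) (P : S -> S -> R) (N : nat)
  (g : {ffun 'I_N -> S} -> R) : R :=
  \sum_(w : {ffun 'I_N -> S}) path_prob pi P w * g w.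

Definition var_sum (pi : S -> R) (P : S -> S -> R) (f : S -> R) (N : nat) : R :=
  let Sf := fun w : {ffun 'I_N -> S} => \sum_(i < N) f (w i) in
  pathE pi P (fun w => (Sf w) ^+ 2) - (pathE pi P Sf) ^+ 2.

Definition asymp_var (pi : S -> R) (P : S -> S -> R) (f : S -> R) : R :=
  limn (fun N : nat => var_sum pi P f N / N%:R : R).

Definition eff_dominates (pi : S -> R) (P Q : S -> S -> R) : Prop :=
  forall f : S -> R, asymp_var pi P f <= asymp_var pi Q f.

Definition mix (a : R) (P Q : S -> S -> R) : S -> S -> R :=
  fun x y => a * P x y + (1 - a) * Q x y.

End MarkovDefs.

From HB Require Import structures.
From mathcomp Require Import all_boot all_order all_algebra.
From mathcomp Require Import all_classical all_reals all_analysis.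
From mathcomp Require Import ring lra.
Import Order.TTheory GRing.Theory Num.Theory.
Import numFieldNormedType.Exports.
Set Implicit Arguments. Unset Strict Implicit. Unset Printing Implicit Defensive.
Local Open Scope ring_scope.

(* For a pi-reversible K, let <u, v> = sum_x pi x u x v x and let
   E_K(h) = <h, h - K h> be the Dirichlet form, which is nonnegative.  If x
   has pi-mean zero and g solves the Poisson equation g - K g = x (solvable
   when K is irreducible, since then only constants are K-harmonic), the
   correlations of the stationary chain telescope to
   v(x, K) = 2 <x, g> - <x, x>, and self-adjointness of K gives
   <x, g> = sup_y (2 <x, y> - E_K(y)).  Hence P' efficiency-dominates P iff
   E_P <= E_P' pointwise.  Since E_{aP + (1-a)Q} = a E_P + (1-a) E_Q with
   a > 0, this criterion is unchanged by mixing with Q. *)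

Lemma linear_onto_lker (F : fieldType) (V : vectType F) (f : V -> V)
    (m : V -> F^o) (v1 : V) :
  linear f -> linear m -> m v1 != 0 ->
  (forall v, f v = 0 -> v \in <[v1]>%VS) -> (forall v, m (f v) = 0) ->
  forall x, m x = 0 -> exists v, f v = x.
Proof.
move=> f_lin m_lin mv1 ker_f mf0 x mx0.
pose Lf := linfun (HB.pack f (GRing.isLinear.Build _ _ _ _ f f_lin) : {linear V -> V}).
pose Lm := linfun (HB.pack m (GRing.isLinear.Build _ _ _ _ m m_lin) : {linear V -> F^o}).
have := limg_ker_dim Lf fullv; rewrite capfv => rank_f.
have := limg_ker_dim Lm fullv; rewrite capfv => rank_m.
have dim_ker_f : (\dim (lker Lf) <= 1)%N.
  have /dimvS : (lker Lf <= <[v1]>)%VS.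
    by apply/subvP => v; rewrite memv_ker lfunE => /eqP /ker_f.
  by rewrite dim_vline; case: (v1 != 0) => // /leq_trans; apply.
have dim_img_m : (1 <= \dim (Lm @: fullv))%N.
  have /dimvS : (<[m v1]> <= Lm @: fullv)%VS.
    have -> : m v1 = Lm v1 by rewrite lfunE.
    by rewrite -memvE memv_img ?memvf.
  by rewrite dim_vline mv1.
have img_f_sub : (Lf @: fullv <= lker Lm)%VS.
  by apply/subvP => _ /memv_imgP [u _ ->]; rewrite memv_ker !lfunE /= mf0.
have dim_ker_m : (\dim (lker Lm) <= \dim (Lf @: fullv))%N.
  rewrite -(leq_add2r (\dim (Lm @: fullv))) rank_m -rank_f addnC leq_add //.
  exact: leq_trans dim_ker_f dim_img_m.
have /eqP img_f : (Lf @: fullv == lker Lm)%VS.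
  by rewrite -(dimv_leqif_eq img_f_sub).2 eqn_leq dim_ker_m dimvS.
have : x \in lker Lm by rewrite memv_ker lfunE /= mx0.
by rewrite -img_f => /memv_imgP [u _ ->]; exists u; rewrite lfunE.
Qed.

Section ReversibleChain.
Variables (R : realType) (S : finType) (pi : S -> R) (K : S -> S -> R).
Hypothesis pi_distr : is_distribution pi.
Hypothesis K_trans : is_transition K.
Hypothesis K_rev : reversible pi K.

Definition dot (u v : S -> R) := \sum_x pi x * u x * v x.
Definition kmul (h : S -> R) : S -> R := fun x => \sum_y K x y * h y.
Definition dirichlet (h : S -> R) := dot h h - dot h (kmul h).

Lemma dotC u v : dot u v = dot v u.
Proof. by apply: eq_bigr => x _; ring. Qed.

Lemma dotBl u v w : dot (fun x => u x - v x) w = dot u w - dot v w.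
Proof. by rewrite /dot -sumrB; apply: eq_bigr => x _; ring. Qed.

Lemma dotBr u v w : dot u (fun x => v x - w x) = dot u v - dot u w.
Proof. by rewrite /dot -sumrB; apply: eq_bigr => x _; ring. Qed.

Lemma dot_linr u v w b c :
  dot w (fun x => b * u x + c * v x) = b * dot w u + c * dot w v.
Proof. by rewrite /dot !mulr_sumr -big_split; apply: eq_bigr => x _ /=; ring. Qed.

Lemma dot1_const c : dot (fun=> 1) (fun=> c) = c.
Proof.
rewrite /dot (eq_bigr (fun x => pi x * c)) => [|x _]; last by rewrite mulr1.
by rewrite -big_distrl /= pi_distr.2 mul1r.
Qed.

Lemma kmulB u v : kmul (fun x => u x - v x) = fun x => kmul u x - kmul v x.
Proof. by apply: funext => x; rewrite /kmul -sumrB; apply: eq_bigr => y _; ring. Qed.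

Lemma kmul_const c : kmul (fun=> c) = fun=> c.
Proof. by apply: funext => x; rewrite /kmul -big_distrl /= K_trans.2 mul1r. Qed.

Lemma iter_kmul_const n c : iter n kmul (fun=> c) = fun=> c.
Proof. by elim: n => //= n ->; rewrite kmul_const. Qed.

Lemma stationary y : \sum_x pi x * K x y = pi y.
Proof. by under eq_bigr do rewrite K_rev; rewrite -mulr_sumr K_trans.2 mulr1. Qed.

Lemma dot_kmul u v : dot u (kmul v) = dot (kmul u) v.
Proof.
rewrite /dot /kmul.
under eq_bigr do rewrite mulr_sumr.
under [RHS]eq_bigr do rewrite mulr_sumr mulr_suml.
rewrite exchange_big; apply: eq_bigr => x _; apply: eq_bigr => y _.
rewrite [LHS](_ : _ = pi y * K y x * (u y * v x)); last ring.
by rewrite K_rev; ring.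
Qed.

Lemma dot1_kmul h : dot (fun=> 1) (kmul h) = dot (fun=> 1) h.
Proof. by rewrite dot_kmul kmul_const. Qed.

Lemma dirichletE h :
  dirichlet h = (\sum_x \sum_y pi x * K x y * (h x - h y) ^+ 2) / 2.
Proof.
have sq_l : \sum_x \sum_y pi x * K x y * h x ^+ 2 = dot h h.
  apply: eq_bigr => x _; rewrite -big_distrl -big_distrr K_trans.2 /=; ring.
have sq_r : \sum_x \sum_y pi x * K x y * h y ^+ 2 = dot h h.
  rewrite exchange_big; apply: eq_bigr => y _; rewrite -big_distrl stationary /=; ring.
have cross : \sum_x \sum_y pi x * K x y * (h x * h y) = dot h (kmul h).
  apply: eq_bigr => x _; rewrite /kmul mulr_sumr; apply: eq_bigr => y _; ring.
have -> : \sum_x \sum_y pi x * K x y * (h x - h y) ^+ 2 =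
    \sum_x \sum_y pi x * K x y * h x ^+ 2 + \sum_x \sum_y pi x * K x y * h y ^+ 2
    - 2 * \sum_x \sum_y pi x * K x y * (h x * h y).
  rewrite mulr_sumr -big_split -sumrB; apply: eq_bigr => x _.
  rewrite mulr_sumr -big_split -sumrB; apply: eq_bigr => y _ /=; ring.
by rewrite sq_l sq_r cross /dirichlet; field.
Qed.

Lemma dirichlet_ge0 h : 0 <= dirichlet h.
Proof.
rewrite dirichletE divr_ge0 //; apply: sumr_ge0 => x _; apply: sumr_ge0 => y _.
by rewrite mulr_ge0 ?sqr_ge0 // mulr_ge0 ?K_trans.1 // ltW // pi_distr.1.
Qed.

Lemma dirichletB u v :
  dirichlet (fun x => u x - v x) =
  dirichlet u - 2 * dot u (fun x => v x - kmul v x) + dirichlet v.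
Proof.
by rewrite /dirichlet kmulB !dotBl !dotBr (dotC v u) (dotC v (kmul u)) -dot_kmul; ring.
Qed.

End ReversibleChain.

Section Trajectories.
Variables (R : realType) (S : finType) (pi : S -> R) (K : S -> S -> R).

Definition extend n (w : {ffun 'I_n.+1 -> S}) (y : S) : {ffun 'I_n.+2 -> S} :=
  [ffun i : 'I_n.+2 => if (i < n.+1)%N then w (inord i) else y].

Lemma extend_lt n (w : {ffun 'I_n.+1 -> S}) y (i : 'I_n.+2) (j : 'I_n.+1) :
  i = j :> nat -> extend w y i = w j.
Proof.
by move=> ij; rewrite ffunE ij ltn_ord; congr (w _); apply: val_inj; rewrite /= inordK.
Qed.

Lemma extend_max n (w : {ffun 'I_n.+1 -> S}) y : extend w y ord_max = y.
Proof. by rewrite ffunE /= ltnn. Qed.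

Lemma path_prob_extend n (w : {ffun 'I_n.+1 -> S}) y :
  path_prob pi K (extend w y) = path_prob pi K w * K (w ord_max) y.
Proof.
rewrite /path_prob big_ord_recr /=; congr (_ * _).
  apply: eq_bigr => -[[|k] lt_k] _ /=; first by congr (pi _); apply: extend_lt.
  have lt_k1 : (k < n.+2)%N by apply: ltn_trans (ltnW lt_k) _.
  have lt_k2 : (k < n.+1)%N by apply: ltnW.
  rewrite (insubT (fun i => i < n.+2)%N lt_k1) (insubT (fun i => i < n.+1)%N lt_k2) /=.
  by rewrite (@extend_lt _ _ _ _ (Ordinal lt_k2)) // (@extend_lt _ _ _ _ (Ordinal lt_k)).
rewrite (insubT (fun i => i < n.+2)%N (ltnW (ltnSn n.+1))) /= extend_max.
by rewrite (@extend_lt _ _ _ _ ord_max).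
Qed.

Lemma sum_ffun_extend n (F : {ffun 'I_n.+2 -> S} -> R) :
  \sum_(w' : {ffun 'I_n.+2 -> S}) F w' =
  \sum_(w : {ffun 'I_n.+1 -> S}) \sum_(y : S) F (extend w y).
Proof.
rewrite pair_big /= (reindex (fun p : {ffun 'I_n.+1 -> S} * S => extend p.1 p.2)) //=.
exists (fun w' => ([ffun j => w' (widen_ord (leqnSn _) j)], w' ord_max)).
  move=> [w y] _; rewrite extend_max; congr (_, _); apply/ffunP => j.
  by rewrite ffunE (@extend_lt _ _ _ _ j).
move=> w' _; apply/ffunP => i; rewrite ffunE /=; case: ifP => lt_i.
  by rewrite ffunE; congr (w' _); apply: val_inj; rewrite /= inordK.
congr (w' _); apply: val_inj => /=.
by have := ltn_ord i; rewrite ltnS leq_eqVlt lt_i orbF => /eqP.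
Qed.

Lemma pathE_markov n (g : {ffun 'I_n.+2 -> S} -> R) :
  pathE pi K g = pathE pi K (fun w : {ffun 'I_n.+1 -> S} =>
     \sum_(y : S) K (w ord_max) y * g (extend w y)).
Proof.
rewrite /pathE sum_ffun_extend; apply: eq_bigr => w _.
by rewrite big_distrr; apply: eq_bigr => y _ /=; rewrite path_prob_extend mulrA.
Qed.

Lemma pathE_ord1 (g : {ffun 'I_1 -> S} -> R) :
  pathE pi K g = \sum_(x : S) pi x * g [ffun => x].
Proof.
rewrite /pathE (reindex (fun x : S => [ffun => x] : {ffun 'I_1 -> S})) /=.
  by apply: eq_bigr => x _; rewrite /path_prob big_ord1 /= ffunE.
exists (fun w : {ffun 'I_1 -> S} => w ord0) => [x _ | w _]; first by rewrite ffunE.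
by apply/ffunP => i; rewrite ffunE (ord1 i).
Qed.

Lemma eq_pathE n (g1 g2 : {ffun 'I_n -> S} -> R) :
  g1 =1 g2 -> pathE pi K g1 = pathE pi K g2.
Proof. by move=> eq_g; apply: eq_bigr => w _; rewrite eq_g. Qed.

Lemma pathED n (g1 g2 : {ffun 'I_n -> S} -> R) :
  pathE pi K (fun w => g1 w + g2 w) = pathE pi K g1 + pathE pi K g2.
Proof. by rewrite /pathE -big_split; apply: eq_bigr => w _; rewrite mulrDr. Qed.

Lemma pathEZ n c (g : {ffun 'I_n -> S} -> R) :
  pathE pi K (fun w => c * g w) = c * pathE pi K g.
Proof. by rewrite /pathE big_distrr; apply: eq_bigr => w _ /=; ring. Qed.

Definition psum n (f : S -> R) (w : {ffun 'I_n -> S}) := \sum_(i < n) f (w i).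

Lemma psum_extend n f (w : {ffun 'I_n.+1 -> S}) y :
  psum f (extend w y) = psum f w + f y.
Proof.
rewrite /psum big_ord_recr /= extend_max; congr (_ + _).
by apply: eq_bigr => i _; rewrite (@extend_lt _ _ _ _ i).
Qed.

End Trajectories.

Section Moments.
Variables (R : realType) (S : finType) (pi : S -> R) (K : S -> S -> R).
Hypothesis pi_distr : is_distribution pi.
Hypothesis K_trans : is_transition K.
Hypothesis K_rev : reversible pi K.

Lemma pathE_last n h :
  pathE pi K (fun w : {ffun 'I_n.+1 -> S} => h (w ord_max)) = dot pi (fun=> 1) h.
Proof.
elim: n h => [|n IHn] h.
  by rewrite pathE_ord1; apply: eq_bigr => x _; rewrite ffunE mulr1.
rewrite pathE_markov (@eq_pathE _ _ _ _ _ _ (fun w => kmul K h (w ord_max))).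
  by rewrite IHn (dot1_kmul K_trans K_rev).
by move=> w; apply: eq_bigr => y _; rewrite extend_max.
Qed.

Lemma pathE_const n c : pathE pi K (fun _ : {ffun 'I_n.+1 -> S} => c) = c.
Proof.
rewrite (@eq_pathE _ _ _ _ _ _ (fun w => (fun=> c) (w ord_max))) //.
by rewrite pathE_last (dot1_const pi_distr).
Qed.

Lemma pathE_psum_last x n h :
  pathE pi K (fun w : {ffun 'I_n.+1 -> S} => psum x w * h (w ord_max)) =
  \sum_(k < n.+1) dot pi x (iter k (kmul K) h).
Proof.
elim: n h => [|n IHn] h.
  rewrite pathE_ord1 big_ord1 /=; apply: eq_bigr => s _.
  by rewrite /psum big_ord1 !ffunE; ring.
rewrite pathE_markov (@eq_pathE _ _ _ _ _ _ (fun w => psum x w * kmul K h (w ord_max) +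
            (fun s => kmul K (fun t => x t * h t) s) (w ord_max))); last first.
  move=> w; rewrite /kmul mulr_sumr -big_split; apply: eq_bigr => y _ /=.
  by rewrite psum_extend extend_max; ring.
rewrite pathED IHn pathE_last (dot1_kmul K_trans K_rev) [RHS]big_ord_recl /= addrC.
congr (_ + _).
  by apply: eq_bigr => s _ /=; ring.
by apply: eq_bigr => k _; rewrite /= add0n -iterS iterSr.
Qed.

Lemma pathE_psum_sqrS x n :
  pathE pi K (fun w : {ffun 'I_n.+2 -> S} => psum x w ^+ 2) =
  pathE pi K (fun w : {ffun 'I_n.+1 -> S} => psum x w ^+ 2) +
  2 * pathE pi K (fun w : {ffun 'I_n.+1 -> S} => psum x w * kmul K x (w ord_max)) +
  dot pi x x.
Proof.
rewrite pathE_markov (@eq_pathE _ _ _ _ _ _ (fun w =>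
    (psum x w ^+ 2 + 2 * (psum x w * kmul K x (w ord_max))) +
    (fun s => kmul K (fun t => x t * x t) s) (w ord_max))); last first.
  move=> w; rewrite /kmul.
  have -> : psum x w ^+ 2 = \sum_y K (w ord_max) y * psum x w ^+ 2.
    by rewrite -big_distrl /= K_trans.2 mul1r.
  rewrite mulr_sumr mulr_sumr -!big_split; apply: eq_bigr => y _ /=.
  by rewrite psum_extend; ring.
rewrite !pathED pathEZ pathE_last (dot1_kmul K_trans K_rev); congr (_ + _).
by apply: eq_bigr => s _; ring.
Qed.

End Moments.

Lemma limn_eq_of_bound (R : realType) (u : nat -> R) (c B : R) :
  (forall n, `|u n.+1 - c| <= B / n.+1%:R) -> limn u = c.
Proof.
move=> u_bound.
have Bharm : ((fun n => B * harmonic n) @ \oo --> (0 : R))%classic.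
  by rewrite -(mulr0 B); apply: cvgMl_tmp; exact: cvg_harmonic.
have : ([sequence u n.+1]_n @ \oo --> c)%classic.
  apply: (@squeeze_cvgr _ _ _ _ (fun n => c - B * harmonic n)
                                (fun n => c + B * harmonic n)).
  - apply: nearW => n /=; have := u_bound n; rewrite ler_norml /harmonic /=.
    by set e := B / _; move=> /andP [? ?]; apply/andP; split; lra.
  - by have := cvgB (cvg_cst c) Bharm; rewrite subr0; apply; exact: _.
  - by have := cvgD (cvg_cst c) Bharm; rewrite addr0; apply; exact: _.
by rewrite cvg_shiftS => /cvg_lim; apply.
Qed.

Section PoissonEquation.
Variables (R : realType) (S : finType) (pi : S -> R) (K : S -> S -> R).
Hypothesis pi_distr : is_distribution pi.
Hypothesis K_trans : is_transition K.
Hypothesis K_rev : reversible pi K.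
Variables (x g : S -> R).
Hypothesis x_mean0 : dot pi (fun=> 1) x = 0.
Hypothesis g_poisson : forall s, g s - kmul K g s = x s.

Local Notation T := (kmul K).

Definition corr m := dot pi g (iter m T g).

Lemma poisson_fun : x = fun s => g s - T g s.
Proof. by apply: funext => s; rewrite g_poisson. Qed.

Lemma dot_iter_g m : dot pi x (iter m T g) = corr m - corr m.+1.
Proof. by rewrite poisson_fun dotBl /corr /= (dot_kmul K_rev). Qed.

Lemma dot_iter_x m :
  dot pi x (iter m T x) = (corr m - corr m.+1) - (corr m.+1 - corr m.+2).
Proof.
have -> : iter m T x = fun s => iter m T g s - iter m.+1 T g s.
  by elim: m => [|m IHm] /=; [exact: poisson_fun | rewrite IHm (kmulB K)].
by rewrite dotBr !dot_iter_g.
Qed.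

Lemma sum_dot_iter_kmul n : \sum_(k < n.+1) dot pi x (iter k T (T x)) =
  (corr 1 - corr 2) - (corr n.+2 - corr n.+3).
Proof.
under eq_bigr do rewrite -iterSr.
elim: n => [|n IHn]; first by rewrite big_ord1 (dot_iter_x 1).
have := dot_iter_x n.+2; rewrite /= => dot_xx.
by rewrite big_ord_recr IHn /= dot_xx; ring.
Qed.

Lemma pathE_psum n : pathE pi K (fun w : {ffun 'I_n.+1 -> S} => psum x w) = 0.
Proof.
rewrite (@eq_pathE _ _ _ _ _ _ (fun w => psum x w * (fun=> 1) (w ord_max))).
  rewrite (pathE_psum_last K_trans K_rev x n (fun=> 1)) big1 // => k _.
  by rewrite (iter_kmul_const K_trans) dotC.
by move=> w; rewrite mulr1.
Qed.

Lemma pathE_psum_sqr n :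
  pathE pi K (fun w : {ffun 'I_n.+1 -> S} => psum x w ^+ 2) =
  n.+1%:R * (corr 0 - corr 2) - 2 * (corr 1 - corr n.+2).
Proof.
have := dot_iter_x 0; rewrite /= => dot_xx.
elim: n => [|n IHn].
  have -> : 1%:R * (corr 0 - corr 2) - 2 * (corr 1 - corr 2) = dot pi x x.
    by rewrite dot_xx; ring.
  rewrite pathE_ord1; apply: eq_bigr => s _.
  by rewrite /psum big_ord1 ffunE; ring.
rewrite (pathE_psum_sqrS K_trans K_rev) IHn (pathE_psum_last K_trans K_rev).
by rewrite sum_dot_iter_kmul dot_xx -[n.+2%:R]natr1; ring.
Qed.

Lemma var_sum_poisson n :
  var_sum pi K x n.+1 = n.+1%:R * (corr 0 - corr 2) - 2 * (corr 1 - corr n.+2).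
Proof.
have := pathE_psum_sqr n; have := pathE_psum n; rewrite /psum /var_sum /= => -> ->.
by rewrite expr2 mulr0 subr0.
Qed.

Lemma norm_iter_kmul_le h m s : `|iter m T h s| <= \sum_t `|h t|.
Proof.
elim: m s => [|m IHm] s /=; first by rewrite (bigD1 s) //= lerDl sumr_ge0.
rewrite /kmul (le_trans (ler_norm_sum _ _ _)) //.
rewrite -[X in _ <= X]mul1r -(K_trans.2 s) mulr_suml.
apply: ler_sum => t _; rewrite normrM ger0_norm ?K_trans.1 //.
by apply: ler_wpM2l; [exact: K_trans.1 | exact: IHm].
Qed.

Lemma norm_corr_le m : `|corr m| <= \sum_s pi s * `|g s| * \sum_t `|g t|.
Proof.
rewrite /corr /dot (le_trans (ler_norm_sum _ _ _)) // ler_sum // => s _.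
rewrite !normrM (gtr0_norm (pi_distr.1 s)) ler_wpM2l ?norm_iter_kmul_le //.
by rewrite mulr_ge0 // ltW // pi_distr.1.
Qed.

Lemma asymp_var_poisson : asymp_var pi K x = 2 * dot pi x g - dot pi x x.
Proof.
have -> : 2 * dot pi x g - dot pi x x = corr 0 - corr 2.
  by have := dot_iter_g 0; have := dot_iter_x 0; rewrite /= => -> ->; ring.
set B := \sum_s pi s * `|g s| * \sum_t `|g t|.
apply: (@limn_eq_of_bound _ _ _ (4 * B)) => n.
have -> : var_sum pi K x n.+1 / n.+1%:R - (corr 0 - corr 2) =
          - (2 * (corr 1 - corr n.+2)) / n.+1%:R.
  by rewrite var_sum_poisson; field; rewrite addrC natr1.
rewrite normrM normrN [`|_^-1|]ger0_norm ?invr_ge0 // ler_wpM2r ?invr_ge0 //.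
rewrite normrM [`|2|]ger0_norm //.
move: (norm_corr_le 1) (norm_corr_le n.+2) (ler_normB (corr 1) (corr n.+2)).
rewrite -/B; lra.
Qed.

End PoissonEquation.

Section MatrixPowers.
Variables (R : realType) (S : finType) (K : S -> S -> R).
Hypothesis K_trans : is_transition K.

Lemma mpow_ge0 n s y : 0 <= mpow K n s y.
Proof.
elim: n s y => [|n IHn] s y /=; first by case: (s == y).
by apply: sumr_ge0 => z _; rewrite mulr_ge0 ?K_trans.1.
Qed.

Lemma iter_kmulE n h s : iter n (kmul K) h s = \sum_y mpow K n s y * h y.
Proof.
elim: n h s => [|n IHn] h s.
  rewrite /= (bigD1 s) //= eqxx mul1r big1 ?addr0 // => y.
  by rewrite eq_sym => /negbTE ->; rewrite mul0r.
rewrite iterSr IHn /kmul /=.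
under eq_bigr do rewrite big_distrr /=.
under [RHS]eq_bigr do rewrite big_distrl /=.
by rewrite exchange_big; apply: eq_bigr => z _; apply: eq_bigr => y _; ring.
Qed.

Lemma mpow_sum1 n s : \sum_y mpow K n s y = 1.
Proof.
have := iter_kmulE n (fun=> 1) s; rewrite (iter_kmul_const K_trans) => ->.
by apply: eq_bigr => y _; rewrite mulr1.
Qed.

Hypothesis K_irr : irreducible K.

Lemma harmonic_const h : (forall s, kmul K h s = h s) -> forall s t, h s = h t.
Proof.
move=> h_harm s0.
(* Maximum principle: K^n x0 averages h x0 - h >= 0 to 0, and charges y. *)
have [x0 _ x0_max] := @arg_maxP _ _ S s0 predT h isT.
have iter_h n : iter n (kmul K) h = h.
  by elim: n => //= n ->; apply: funext => s; rewrite h_harm.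
suff h_x0 y : h y = h x0 by move=> t; rewrite !h_x0.
have [n mpos] := K_irr x0 y.
have avg0 : \sum_z mpow K n x0 z * (h x0 - h z) = 0.
  under eq_bigr do rewrite mulrBr.
  by rewrite sumrB -big_distrl /= mpow_sum1 mul1r -iter_kmulE iter_h subrr.
have : mpow K n x0 y * (h x0 - h y) = 0.
  apply: (psumr_eq0P _ avg0) => // z _.
  by rewrite mulr_ge0 ?mpow_ge0 // subr_ge0; apply: x0_max.
by move/eqP; rewrite mulf_eq0 (gt_eqF mpos) subr_eq0 => /eqP ->.
Qed.

End MatrixPowers.

Lemma poisson_solvable (R : realType) (S : finType) (pi : S -> R) (K : S -> S -> R) x :
  is_distribution pi -> is_transition K -> reversible pi K -> irreducible K ->
  dot pi (fun=> 1) x = 0 -> exists g, forall s, g s - kmul K g s = x s.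
Proof.
move=> pi_distr K_trans K_rev K_irr x_mean0.
pose V := {ffun S -> R^o}.
pose f (v : V) : V := [ffun s => v s - kmul K v s].
pose m (v : V) : R^o := dot pi (fun=> 1) v.
have f_lin : linear f.
  move=> a u v; apply/ffunP => s; rewrite !ffunE /kmul.
  under eq_bigr do rewrite !ffunE.
  rewrite /GRing.scale /=.
  under eq_bigr do rewrite mulrDr mulrCA.
  by rewrite big_split /= -big_distrr /=; ring.
have m_lin : linear m.
  move=> a u v; rewrite /m /dot.
  under eq_bigr do rewrite !ffunE.
  by rewrite /GRing.scale /= big_distrr -big_split /=; apply: eq_bigr => s _; ring.
have [s0 _] : exists s0 : S, true.
  case: (pickP (@predT S)) => [s _|S0]; first by exists s.
  by have := pi_distr.2; rewrite big_pred0 // => /eqP; rewrite eq_sym oner_eq0.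
have [g fg] : exists v : V, f v = [ffun s => x s].
  apply: (@linear_onto_lker _ _ f m [ffun=> 1]) => // [|v ker_v|v|].
  - rewrite /m /dot; under eq_bigr do rewrite ffunE !mulr1.
    by rewrite pi_distr.2 oner_neq0.
  - apply/vlineP; exists (v s0); apply/ffunP => s; rewrite !ffunE /GRing.scale /= mulr1.
    apply: (harmonic_const K_trans K_irr) => t.
    by have /eqP := congr1 (fun w : V => w t) ker_v; rewrite !ffunE subr_eq0 eq_sym => /eqP.
  - rewrite /m; transitivity (dot pi (fun=> 1) (fun t => v t - kmul K v t)).
      by rewrite /dot; apply: eq_bigr => t _; rewrite ffunE.
    by rewrite dotBr (dot1_kmul K_trans K_rev) subrr.
  - by rewrite -x_mean0 /m /dot; apply: eq_bigr => t _; rewrite ffunE.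
by exists g => s; have := congr1 (fun w : V => w s) fg; rewrite !ffunE.
Qed.

Section AsymptoticVariance.
Variables (R : realType) (S : finType) (pi : S -> R) (K : S -> S -> R).
Hypothesis pi_distr : is_distribution pi.
Hypothesis K_trans : is_transition K.
Hypothesis K_rev : reversible pi K.

Lemma var_sumE f N : var_sum pi K f N =
  pathE pi K (fun w : {ffun 'I_N -> S} => psum f w ^+ 2) - pathE pi K (@psum _ _ N f) ^+ 2.
Proof. by []. Qed.

Lemma pathE_var_sub_const n (h : {ffun 'I_n.+1 -> S} -> R) k :
  pathE pi K (fun w => (h w - k) ^+ 2) - pathE pi K (fun w => h w - k) ^+ 2 =
  pathE pi K (fun w => h w ^+ 2) - pathE pi K h ^+ 2.
Proof.
have -> : pathE pi K (fun w => (h w - k) ^+ 2) =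
    pathE pi K (fun w => h w ^+ 2) - 2 * k * pathE pi K h + k ^+ 2.
  rewrite (@eq_pathE _ _ _ _ _ _ (fun w => (h w ^+ 2 + - (2 * k) * h w) + k ^+ 2)).
    by rewrite !pathED pathEZ (pathE_const pi_distr K_trans K_rev); ring.
  by move=> w; ring.
have -> : pathE pi K (fun w => h w - k) = pathE pi K h - k.
  by rewrite pathED (pathE_const pi_distr K_trans K_rev).
ring.
Qed.

Lemma asymp_var_sub_const f c :
  asymp_var pi K (fun s => f s - c) = asymp_var pi K f.
Proof.
rewrite /asymp_var; congr (limn _); apply: funext => -[|n]; first by rewrite invr0 !mulr0.
have shift (w : {ffun 'I_n.+1 -> S}) : psum (fun s => f s - c) w = psum f w - c *+ n.+1.
  by rewrite /psum /= sumrB sumr_const card_ord.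
rewrite !var_sumE (@eq_pathE _ _ pi K _ _ _ (fun w => congr1 (fun t => t ^+ 2) (shift w))).
by rewrite (@eq_pathE _ _ pi K _ _ _ shift) pathE_var_sub_const.
Qed.

Variables (x g : S -> R).
Hypothesis g_poisson : forall s, g s - kmul K g s = x s.

Lemma dirichlet_poisson : dirichlet pi K g = dot pi x g.
Proof.
rewrite /dirichlet -dotBr dotC; congr dot.
by apply: funext => s; rewrite g_poisson.
Qed.

Lemma dot_poisson_ge y : 2 * dot pi x y - dirichlet pi K y <= dot pi x g.
Proof.
have := dirichlet_ge0 pi_distr K_trans K_rev (fun s => y s - g s).
rewrite (dirichletB K_rev) dirichlet_poisson dotC.
rewrite (_ : (fun s => g s - kmul K g s) = x); last by apply: funext => s; rewrite g_poisson.
lra.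
Qed.

End AsymptoticVariance.

Lemma eff_dominates_dirichlet (R : realType) (S : finType) (pi : S -> R) K1 K2 :
  is_distribution pi ->
  is_transition K1 -> reversible pi K1 -> irreducible K1 ->
  is_transition K2 -> reversible pi K2 -> irreducible K2 ->
  eff_dominates pi K1 K2 <-> forall y, dirichlet pi K2 y <= dirichlet pi K1 y.
Proof.
move=> pi_distr K1_trans K1_rev K1_irr K2_trans K2_rev K2_irr.
split=> [dom y | le_dir f].
- (* y itself solves the Poisson equation of K2 for this x. *)
  pose x s := y s - kmul K2 y s.
  have x_mean0 : dot pi (fun=> 1) x = 0.
    by rewrite dotBr (dot1_kmul K2_trans K2_rev) subrr.
  have y_poisson s : y s - kmul K2 y s = x s by [].
  have [g1 g1_poisson] := poisson_solvable pi_distr K1_trans K1_rev K1_irr x_mean0.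
  have := dom x.
  rewrite (asymp_var_poisson pi_distr K1_trans K1_rev x_mean0 g1_poisson).
  rewrite (asymp_var_poisson pi_distr K2_trans K2_rev x_mean0 y_poisson).
  have := dot_poisson_ge pi_distr K1_trans K1_rev g1_poisson y.
  have := dirichlet_poisson pi y_poisson.
  lra.
- pose mu := dot pi (fun=> 1) f.
  pose x s := f s - mu.
  have x_mean0 : dot pi (fun=> 1) x = 0 by rewrite dotBr (dot1_const pi_distr) subrr.
  rewrite -(asymp_var_sub_const pi_distr K1_trans K1_rev f mu).
  rewrite -(asymp_var_sub_const pi_distr K2_trans K2_rev f mu) -/x.
  have [g1 g1_poisson] := poisson_solvable pi_distr K1_trans K1_rev K1_irr x_mean0.
  have [g2 g2_poisson] := poisson_solvable pi_distr K2_trans K2_rev K2_irr x_mean0.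
  rewrite (asymp_var_poisson pi_distr K1_trans K1_rev x_mean0 g1_poisson).
  rewrite (asymp_var_poisson pi_distr K2_trans K2_rev x_mean0 g2_poisson).
  have := dot_poisson_ge pi_distr K2_trans K2_rev g2_poisson g1.
  have := dirichlet_poisson pi g1_poisson.
  have := le_dir g1.
  lra.
Qed.

Section Mixtures.
Variables (R : realType) (S : finType) (pi : S -> R) (a : R) (P Q : S -> S -> R).

Lemma mix_reversible : reversible pi P -> reversible pi Q -> reversible pi (mix a P Q).
Proof.
move=> P_rev Q_rev x y; rewrite /mix !mulrDr.
by rewrite mulrCA P_rev mulrCA (mulrCA (pi x)) Q_rev (mulrCA (pi y) (1 - a)).
Qed.

Lemma dirichlet_mix h :
  dirichlet pi (mix a P Q) h = a * dirichlet pi P h + (1 - a) * dirichlet pi Q h.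
Proof.
rewrite /dirichlet (_ : kmul _ h = fun s => a * kmul P h s + (1 - a) * kmul Q h s).
  by rewrite dot_linr; ring.
apply: funext => s; rewrite /kmul /mix !big_distrr -big_split /=.
by apply: eq_bigr => t _; ring.
Qed.

Hypotheses (P_trans : is_transition P) (Q_trans : is_transition Q).
Hypotheses (a_ge0 : 0 <= a) (a_le1 : a <= 1).

Lemma mix_transition : is_transition (mix a P Q).
Proof.
split=> [x y|x]; first by rewrite /mix addr_ge0 // mulr_ge0 ?P_trans.1 ?Q_trans.1 ?subr_ge0.
by rewrite /mix big_split -!big_distrr /= P_trans.2 Q_trans.2; ring.
Qed.

Lemma mpow_mix_ge n x y : a ^+ n * mpow P n x y <= mpow (mix a P Q) n x y.
Proof.
elim: n x y => [|n IHn] x y /=; first by rewrite expr0 mul1r.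
rewrite big_distrr; apply: ler_sum => z _ /=.
apply: (@le_trans _ _ (mpow (mix a P Q) n x z * (a * P z y))).
  rewrite (_ : _ * _ = a ^+ n * mpow P n x z * (a * P z y)); last by rewrite exprS; ring.
  by apply: ler_wpM2r; rewrite ?mulr_ge0 ?P_trans.1.
apply: ler_wpM2l; first exact: (mpow_ge0 mix_transition).
by rewrite /mix lerDl mulr_ge0 ?subr_ge0 ?Q_trans.1.
Qed.

Lemma mix_irreducible : 0 < a -> irreducible P -> irreducible (mix a P Q).
Proof.
move=> a_gt0 P_irr x y; have [n mpos] := P_irr x y; exists n.
by apply: lt_le_trans (mpow_mix_ge n x y); rewrite mulr_gt0 ?exprn_gt0.
Qed.

End Mixtures.


Theorem theorem4 (R : realType) (S : finType) (pi : S -> R)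
  (P P' Q : S -> S -> R) (a : R) :
  is_distribution pi ->
  is_transition P -> is_transition P' -> is_transition Q ->
  reversible pi P -> reversible pi P' -> reversible pi Q ->
  irreducible P -> irreducible P' ->
  0 < a -> a < 1 ->
  (eff_dominates pi P' P <->
   eff_dominates pi (mix a P' Q) (mix a P Q)).
Proof.
move=> pi_distr P_trans P'_trans Q_trans P_rev P'_rev Q_rev P_irr P'_irr a_gt0 a_lt1.
have [a_ge0 a_le1] := (ltW a_gt0, ltW a_lt1).
rewrite (eff_dominates_dirichlet pi_distr P'_trans P'_rev P'_irr P_trans P_rev P_irr).
rewrite (eff_dominates_dirichlet pi_distr
  (mix_transition P'_trans Q_trans a_ge0 a_le1) (mix_reversible a P'_rev Q_rev)
  (mix_irreducible P'_trans Q_trans a_ge0 a_le1 a_gt0 P'_irr)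
  (mix_transition P_trans Q_trans a_ge0 a_le1) (mix_reversible a P_rev Q_rev)
  (mix_irreducible P_trans Q_trans a_ge0 a_le1 a_gt0 P_irr)).
by split=> le_dir y; have := le_dir y; rewrite !dirichlet_mix; nra.
Qed.
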